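(* For integers $0\le k\le n$, \[ S_B[n,k]=\sum_{j=k}^n\binom{n}{j}[2]_q^{\,j-k}q^{\,j-k}\,S[j,k]_{q^2} \] and \[ S_B[n,k]=S_D[n,k]+n\cdot[2]_q^{\,n-k-1}q^{\,n-k-1}\,S[n-1,k]_{q^2} \] (when $n=0$ the last summand is $0$ because of the factor $n$).
   Context: $[k]_q=1+\dots+q^{k-1}$, $[0]_q=0$. Carlitz's $q$-Stirling numbers $S[n,k]$: $S[0,k]=\delta_{0k}$, $S[n,k]=S[n-1,k-1]+[k]_qS[n-1,k]$ for $n\ge1$; $S[n,k]_{q^2}$ is $S[n,k]$ with $q$ replaced by $q^2$ (and $S[n,k]=0$ for $k>n$ or $k<0$). $S_B[n,k]$: $S_B[0,k]=\delta_{0k}$, $S_B[n,k]=S_B[n-1,k-1]+[2k+1]_qS_B[n-1,k]$. For $S\subset\mathbb{Z}\setminus\{0\}$, $\overline{S}=\{-i:i\in S\}$, a standard signed partition (SSP) of $S$ with $k$ blocks is a sequence $(S_1,\dots,S_k)$ of disjoint nonempty subsets of $S\cup\overline{S}$ with $\{S_1,\dots,S_k,\overline{S_1},\dots,\overline{S_k}\}$ a partition of $S\cup\overline{S}$ and $\min|S_1|\le\dots\le\min|S_k|$ ($|S_i|=\{|j|:j\in S_i\}$). A PSSP of $S$ is an SSP of a (possibly empty) subset of $S$. $B(S,k)$, $B_{\subseteq}(S,k)$ are the sets of SSPs, PSSPs of $S$ with $k$ blocks, and $D_{\subseteq}([n],k)=B_{\subseteq}([n],k)\setminus\bigcup_{i=1}^nB([n]\setminus\{i\},k)$.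 For $\pi=(S_1,\dots,S_k)$, $\mathrm{pos}(\pi)=\#\{x\in\bigcup_iS_i:x>0\}$, $m(\pi)=2\sum_{i=1}^ki\cdot\#S_i-\mathrm{pos}(\pi)$. The type D $q$-Stirling numbers are $S_D[n,k]=\frac{1}{q^{k^2}[2]_q^k}\sum_{\pi\in D_{\subseteq}([n],k)}q^{m(\pi)}$. *)

From mathcomp Require Import all_boot all_order all_algebra.
Set Implicit Arguments. Unset Strict Implicit. Unset Printing Implicit Defensive.
Import GRing.Theory.
Local Open Scope ring_scope.

Section Defs.
Variable R : fieldType.

Definition qint (q : R) (k : nat) : R := \sum_(i < k) q ^+ i.

Fixpoint qS (q : R) (n k : nat) : R :=
  match n with
  | 0 => (k == 0%N)%:R
  | n'.+1 => (if k is k'.+1 then qS q n' k' else 0) + qint q k * qS q n' k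
  end.

Fixpoint qSB (q : R) (n k : nat) : R :=
  match n with
  | 0 => (k == 0%N)%:R
  | n'.+1 => (if k is k'.+1 then qSB q n' k' else 0) + qint q (2 * k + 1) * qSB q n' k
  end.
End Defs.

(* Signed elements of [n] u -[n]: (true, i) stands for +(i+1), (false, i) for -(i+1). *)
Definition sgn (n : nat) := (bool * 'I_n)%type.
Definition negs n (x : sgn n) : sgn n := (~~ x.1, x.2).
Definition negset n (A : {set sgn n}) : {set sgn n} := [set negs x | x in A].
Definition absn n (x : sgn n) : nat := (val x.2).+1.
Definition minabs n (A : {set sgn n}) : nat := \big[minn/n]_(x in A) absn x.

(* pi : 'I_k -> blocks, pi i = S_(i+1).
   is_ssp T k pi : pi is a standard signed partition of T (a subset of [n]) with k blocks. *)
Definition is_ssp n k (T : {set 'I_n}) (pi : {ffun 'I_k -> {set sgn n}}) : bool :=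
  [&& [forall i, pi i != set0],
      [forall i, forall j, (i != j) ==> [disjoint pi i & pi j]],
      [forall i, forall j, [disjoint pi i & negset (pi j)]],
      (\bigcup_i (pi i :|: negset (pi i)) == [set x : sgn n | x.2 \in T]) &
      [forall i : 'I_k, forall j : 'I_k, (i <= j)%N ==> (minabs (pi i) <= minabs (pi j))%N]].

Definition is_pssp n k (pi : {ffun 'I_k -> {set sgn n}}) : bool :=
  [exists T : {set 'I_n}, is_ssp T pi].

(* D_subseteq([n],k) = B_subseteq([n],k) minus the union of B([n]\{i},k) *)
Definition is_D n k (pi : {ffun 'I_k -> {set sgn n}}) : bool :=
  is_pssp pi && [forall i : 'I_n, ~~ is_ssp ([set: 'I_n] :\ i) pi].

Definition pos n k (pi : {ffun 'I_k -> {set sgn n}}) : nat :=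
  #|[set x : sgn n | x.1 & [exists i, x \in pi i]]|.

Definition mstat n k (pi : {ffun 'I_k -> {set sgn n}}) : nat :=
  (2 * (\sum_(i < k) (val i).+1 * #|pi i|) - pos pi)%N.

Definition SD (R : fieldType) (q : R) (n k : nat) : R :=
  (q ^+ (k * k) * (qint q 2) ^+ k)^-1 *
  \sum_(pi : {ffun 'I_k -> {set sgn n}} | is_D pi) q ^+ mstat pi.

From mathcomp Require Import all_boot all_order all_algebra.
From mathcomp Require Import zify ring.
Set Implicit Arguments. Unset Strict Implicit. Unset Printing Implicit Defensive.
Import GRing.Theory.

(* For weights w, let S_w be the triangle S_w(n+1,k) = S_w(n,k-1) + w_k S_w(n,k).
   Pascal's rule shows that S_{1 + a w} is the binomial transform with ratio a
   of S_w, and [2k+1]_q = 1 + q[2]_q [k]_{q^2} exhibits S_B in this form, which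
   is the first identity.
   For the second, sum q^m over the signed partitions of each support T.  The
   largest element x of T occurs, with one of two signs, either as a singleton
   block, necessarily the last one, or inside one of the k blocks, where it does
   not change the block minimum.  Removing it lowers m by 2(k+1) in the first
   case and by 2i if it lies in S_i, minus one if x is positive, so the sum over
   T satisfies the recurrence of q^{k^2} [2]_q^k (q[2]_q)^{|T|-k} S[|T|,k]_{q^2}.
   D_subseteq([n],k) consists of the PSSPs whose support is not [n] minus a
   point, so S_D is the binomial sum minus its n terms with |T| = n-1. *)

Section StirlingTriangle.
Variable R : comNzRingType.
Local Open Scope ring_scope.

Lemma sum_binS (g : nat -> R) n :
  \sum_(j < n.+2) 'C(n.+1, j)%:R * g j = \sum_(j < n.+1) 'C(n, j)%:R * (g j + g j.+1).
Proof.
under [RHS]eq_bigr do rewrite mulrDr.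
rewrite big_split /= [LHS]big_ord_recl [X in _ = X + _]big_ord_recl /= !bin0 -addrA.
congr (_ + _); under eq_bigr => j _ do rewrite /bump /= add1n binS natrD mulrDl.
by rewrite big_split /= big_ord_recr /= bin_small // mul0r addr0.
Qed.

Fixpoint stirling (w : nat -> R) (n k : nat) : R :=
  match n with
  | 0 => (k == 0%N)%:R
  | n'.+1 => (if k is k'.+1 then stirling w n' k' else 0) + w k * stirling w n' k
  end.

Lemma stirling_small w n k : (n < k)%N -> stirling w n k = 0.
Proof.
elim: n k => [|n IH] [|k] //= ltnk.
by rewrite !IH ?mulr0 ?addr0 //; lia.
Qed.

Definition binomial_transform (a : R) (f : nat -> nat -> R) n k :=
  \sum_(j < n.+1) 'C(n, j)%:R * (a ^+ (j - k) * f j k).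

Lemma binomial_transform_from a (f : nat -> nat -> R) n k :
  (forall j, (j < k)%N -> f j k = 0) ->
  binomial_transform a f n k = \sum_(k <= j < n.+1) 'C(n, j)%:R * (a ^+ (j - k) * f j k).
Proof.
move=> f_small; rewrite big_geq_mkord /binomial_transform (bigID (fun j : 'I_n.+1 => k <= j)%N) /=.
by rewrite [X in _ + X]big1 ?addr0 // => j; rewrite -ltnNge => /f_small ->; rewrite !mulr0.
Qed.

Lemma stirling_binomial a w n k :
  stirling (fun i => 1 + a * w i) n k = binomial_transform a (stirling w) n k.
Proof.
elim: n k => [|n IH] k.
  by rewrite /binomial_transform big_ord1 sub0n mul1r expr0 mul1r.
have stepS j : a ^+ (j.+1 - k) * stirling w j.+1 k =
    (if k is k'.+1 then a ^+ (j - k') * stirling w j k' else 0)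
    + a * w k * (a ^+ (j - k) * stirling w j k).
  have [ltjk|lekj] := ltnP j k.
    rewrite /= [stirling w j k]stirling_small // !mulr0 !addr0.
    by case: k ltjk => [|k] //=; rewrite subSS.
  case: k lekj => [|k] lekj /=; first by rewrite !subn0 exprS; ring.
  by rewrite subSS (_ : j - k = (j - k.+1).+1)%N ?exprS; [ring | lia].
rewrite /= /binomial_transform (sum_binS (fun j => a ^+ (j - k) * stirling w j k)).
under eq_bigr => j _ do rewrite stepS !mulrDr [_ * (a * w k * _)]mulrCA.
rewrite !big_split /= -mulr_sumr -!/(binomial_transform _ _ _ _) -!IH.
case: k {stepS} => [|k]; last by rewrite -/(binomial_transform _ _ _ _) -IH; ring.
by rewrite big1 ?add0r; [ring | move=> j _; rewrite mulr0].
Qed.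

End StirlingTriangle.

Section QIntegers.
Variable R : fieldType.
Implicit Types (p q : R).
Local Open Scope ring_scope.

Lemma qintS p m : qint p m.+1 = qint p m + p ^+ m.
Proof. by rewrite /qint big_ord_recr. Qed.

Lemma qint2 q : qint q 2 = 1 + q.
Proof. by rewrite /qint big_ord_recr big_ord1 /= expr0 expr1. Qed.

Lemma qint_odd q k : qint q (2 * k + 1) = 1 + q * qint q 2 * qint (q ^+ 2) k.
Proof.
elim: k => [|k IH]; first by rewrite /qint big_ord1 big_ord0 mulr0 addr0.
rewrite (_ : 2 * k.+1 + 1 = (2 * k + 1).+2)%N; last by lia.
by rewrite qint2 !qintS IH qint2 -exprM !addn1 !exprS; ring.
Qed.

Lemma qS_stirling p n k : qS p n k = stirling (qint p) n k.
Proof. by elim: n k => [|n IH] [|k] //=; rewrite !IH. Qed.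

Lemma qSB_stirling q n k :
  qSB q n k = stirling (fun i => 1 + q * qint q 2 * qint (q ^+ 2) i) n k.
Proof. by elim: n k => [|n IH] [|k] //=; rewrite -qint_odd !IH. Qed.

Lemma qSS p n k :
  qS p n.+1 k = (if k is k'.+1 then qS p n k' else 0) + qint p k * qS p n k.
Proof. by []. Qed.

Lemma qS_small p n k : (n < k)%N -> qS p n k = 0.
Proof. by rewrite qS_stirling; apply: stirling_small. Qed.

Lemma qSB_binomial q n k :
  qSB q n k = binomial_transform (q * qint q 2) (qS (q ^+ 2)) n k.
Proof.
rewrite qSB_stirling stirling_binomial; apply: eq_bigr => j _.
by rewrite qS_stirling.
Qed.

End QIntegers.

Lemma disjointP (T : finType) (A B : {set T}) :
  reflect (forall x, x \in A -> x \in B -> False) [disjoint A & B].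
Proof.
apply: (iffP idP) => [AB x xA xB | AB]; first by rewrite (disjointFr AB xA) in xB.
by apply/pred0P => x /=; apply/negP => /andP [xA xB]; apply: AB xA xB.
Qed.

Lemma bigmin_le (I : eqType) (r : seq I) (P : pred I) (F : I -> nat) m y :
  y \in r -> P y -> (\big[minn/m]_(x <- r | P x) F x <= F y)%N.
Proof.
elim: r => // c r IH; rewrite inE big_cons => /orP [/eqP <-|yr] Py.
  by rewrite Py geq_minl.
case: (P c); last exact: IH.
exact: leq_trans (geq_minr _ _) (IH yr Py).
Qed.

Section SignedSets.
Variable n : nat.
Implicit Types (A B : {set sgn n}) (T : {set 'I_n}).

Lemma negsK : involutive (@negs n).
Proof. by case=> b i; rewrite /negs /= negbK. Qed.

Lemma mem_negset A y : (y \in negset A) = (negs y \in A).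
Proof. by rewrite /negset (can_imset_pre _ negsK) inE. Qed.

Lemma minabs_le A y : y \in A -> (minabs A <= absn y)%N.
Proof. by move=> yA; rewrite /minabs; apply: bigmin_le => //; apply: mem_index_enum. Qed.

Lemma minabs_ge A m : (m <= n)%N -> (forall y, y \in A -> m <= absn y)%N ->
  (m <= minabs A)%N.
Proof.
by move=> mn lemA; rewrite /minabs; elim/big_ind: _ => // u v mu mv; rewrite leq_min mu mv.
Qed.

Lemma minabs_mono A B :
  (forall b, b \in B -> exists2 a, a \in A & (absn a <= absn b)%N) ->
  (minabs A <= minabs B)%N.
Proof.
move=> AB; apply: minabs_ge => [|b /AB [a aA leab]].
  by rewrite /minabs; elim/big_ind: _ => // [u v un _|y _]; rewrite ?geq_min ?un //; apply: ltn_ord.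
exact: leq_trans (minabs_le aA) leab.
Qed.

Lemma minabs_eq A B :
  (forall b, b \in B -> exists2 a, a \in A & (absn a <= absn b)%N) ->
  (forall a, a \in A -> exists2 b, b \in B & (absn b <= absn a)%N) ->
  minabs A = minabs B.
Proof. by move=> AB BA; apply/eqP; rewrite eqn_leq !minabs_mono. Qed.

Lemma minabs1 (y : sgn n) : minabs [set y] = absn y.
Proof.
apply/eqP; rewrite eqn_leq minabs_le ?set11 // minabs_ge ?ltn_ord //.
by move=> z /set1P ->.
Qed.

Record ssp k T (pi : {ffun 'I_k -> {set sgn n}}) : Prop := SSP {
  ssp_neq0 : forall i, pi i != set0;
  ssp_disjoint : forall i j y, y \in pi i -> y \in pi j -> i = j;
  ssp_negs : forall i j y, y \in pi i -> negs y \in pi j -> False;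
  ssp_sub : forall i y, y \in pi i -> y.2 \in T;
  ssp_cover : forall e, e \in T -> exists i s, (s, e) \in pi i;
  ssp_sorted : forall i j : 'I_k, (i <= j)%N -> (minabs (pi i) <= minabs (pi j))%N }.

Lemma sspP k T (pi : {ffun 'I_k -> {set sgn n}}) : reflect (ssp T pi) (is_ssp T pi).
Proof.
apply: (iffP and5P) => [[/forallP ne0 /forallP disj /forallP negs0 /eqP cov /forallP srt]
                       | [ne0 disj negs0 sub cov srt]].
  have inT y : (y.2 \in T) = (y \in \bigcup_i (pi i :|: negset (pi i))).
    by rewrite cov inE.
  split=> //.
  - move=> i j y yi yj; apply/eqP; apply: contraT => ij.
    by move: (disj i) => /forallP /(_ j); rewrite ij => /disjointP /(_ y yi yj).
  - move=> i j y yi yj; move: (negs0 i) => /forallP /(_ j) /disjointP /(_ y yi).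
    by rewrite mem_negset; apply.
  - by move=> i y yi; rewrite inT; apply/bigcupP; exists i; rewrite ?inE ?yi.
  - move=> e; rewrite -[e]/((true, e).2) inT => /bigcupP [i _].
    by rewrite inE mem_negset => /orP [] ?; [exists i, true | exists i, false].
  - by move=> i j; move: (srt i) => /forallP /(_ j) /implyP.
split.
- exact/forallP.
- apply/forallP => i; apply/forallP => j; apply/implyP => ij.
  by apply/disjointP => y yi /(disj _ _ _ yi) eqij; rewrite eqij eqxx in ij.
- apply/forallP => i; apply/forallP => j; apply/disjointP => y yi.
  by rewrite mem_negset => /(negs0 _ _ _ yi).
- apply/eqP/setP => y; rewrite inE; apply/bigcupP/idP.
    by case=> i _; rewrite inE mem_negset => /orP [] /sub //; rewrite /negs.
  case: y => b e /= /cov [i [s se]]; exists i => //.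
  by rewrite inE mem_negset /negs /=; case: b; case: s se => ->; rewrite ?orbT.
- by apply/forallP => i; apply/forallP => j; apply/implyP; apply: srt.
Qed.

Lemma ssp_abs_uniq k T (pi : {ffun 'I_k -> {set sgn n}}) i j s b e :
  ssp T pi -> (s, e) \in pi i -> ((b, e) \in pi j) = (j == i) && (b == s).
Proof.
move=> S sei; apply/idP/andP => [bej|[/eqP -> /eqP -> //]].
have [eqbs|neqbs] := eqVneq b s; first by subst b; rewrite (ssp_disjoint S bej sei) !eqxx.
have negsb : negs (b, e) = (s, e) by rewrite /negs; case: b s neqbs {sei bej} => [] [].
by case: (ssp_negs S bej (j := i)); rewrite negsb.
Qed.

Definition weight k (pi : {ffun 'I_k -> {set sgn n}}) :=
  (\sum_(i < k) (val i).+1 * #|pi i|)%N.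

Lemma pos_le_weight k (pi : {ffun 'I_k -> {set sgn n}}) : (pos pi <= weight pi)%N.
Proof.
apply: (@leq_trans #|\bigcup_i pi i|).
  apply: subset_leq_card; apply/subsetP => y; rewrite inE => /andP [_ /existsP [i yi]].
  by apply/bigcupP; exists i.
apply: (@leq_trans (\sum_i #|pi i|)); last by apply: leq_sum => i _; rewrite mulSn leq_addr.
elim/big_ind2: _ => [|A1 m1 A2 m2 le1 le2|//]; first by rewrite cards0.
by rewrite cardsU; apply: leq_trans (leq_subr _ _) (leq_add le1 le2).
Qed.

Lemma mstat_extend k k' (pi : {ffun 'I_k -> {set sgn n}}) (pi' : {ffun 'I_k' -> {set sgn n}})
    c (b : bool) :
  (0 < c)%N -> weight pi' = (weight pi + c)%N -> pos pi' = (pos pi + b)%N ->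
  mstat pi' = (mstat pi + (2 * c - b))%N.
Proof.
rewrite /mstat -!/(weight _) => c_gt0 -> ->.
by have := pos_le_weight pi; case: b; lia.
Qed.

Lemma pos_extend k k' (pi : {ffun 'I_k -> {set sgn n}}) (pi' : {ffun 'I_k' -> {set sgn n}})
    y :
  (forall z, [exists i, z \in pi' i] = [exists i, z \in pi i] || (z == y)) ->
  ~~ [exists i, y \in pi i] -> pos pi' = (pos pi + y.1)%N.
Proof.
move=> ext yN; rewrite /pos; set S := [set z : sgn n | z.1 & [exists i, z \in pi i]].
have -> : [set z : sgn n | z.1 & [exists i, z \in pi' i]] = if y.1 then y |: S else S.
  apply/setP => z; rewrite (fun_if (fun A => z \in A)) !inE ext.
  by case: (eqVneq z y) => [->|]; case: y.1; rewrite ?(negbTE yN) ?orbF ?andbF.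
by case: ifP; rewrite ?addn0 // cardsU1 inE negb_and yN orbT addnC.
Qed.

Section RemoveMax.
Variables (T : {set 'I_n}) (x : 'I_n).
Hypotheses (xT : x \in T) (xmax : forall e, e \in T -> (val e <= val x)%N).
Let T' := T :\ x.

Lemma ssp_neq_max k (pi : {ffun 'I_k -> {set sgn n}}) j y :
  ssp T' pi -> y \in pi j -> y.2 != x.
Proof. by move=> S /(ssp_sub S); rewrite in_setD1 => /andP []. Qed.

Lemma notin_ssp_max k (pi : {ffun 'I_k -> {set sgn n}}) s :
  ssp T' pi -> ~~ [exists i, (s, x) \in pi i].
Proof. by move=> S; apply/existsP => [[i /(ssp_neq_max S)]]; rewrite eqxx. Qed.

Lemma absn_le_max (y : sgn n) : y.2 \in T -> (absn y <= absn (true, x))%N.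
Proof. exact: xmax. Qed.

Lemma minabs_le_max k (pi : {ffun 'I_k -> {set sgn n}}) j :
  ssp T' pi -> (minabs (pi j) <= absn (true, x))%N.
Proof.
move=> S; have /set0Pn [z zj] := ssp_neq0 S j.
apply: leq_trans (minabs_le zj) (absn_le_max _).
by move: (ssp_sub S zj); rewrite in_setD1 => /andP [].
Qed.

Definition push_max k (pi : {ffun 'I_k -> {set sgn n}}) (s : bool) :
  {ffun 'I_k.+1 -> {set sgn n}} :=
  [ffun i => if unlift ord_max i is Some j then pi j else [set (s, x)]].

Definition pop_max k (pi : {ffun 'I_k.+1 -> {set sgn n}}) :=
  ([ffun j => pi (lift ord_max j)], (true, x) \in pi ord_max).

Definition max_singleton k (pi : {ffun 'I_k.+1 -> {set sgn n}}) :=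
  [exists s, pi ord_max == [set (s, x)]].

Lemma push_max_last k (pi : {ffun 'I_k -> {set sgn n}}) s :
  push_max pi s ord_max = [set (s, x)].
Proof. by rewrite ffunE unlift_none. Qed.

Lemma push_max_lift k (pi : {ffun 'I_k -> {set sgn n}}) s j :
  push_max pi s (lift ord_max j) = pi j.
Proof. by rewrite ffunE liftK. Qed.

Lemma max_singleton_push k (pi : {ffun 'I_k -> {set sgn n}}) s :
  max_singleton (push_max pi s).
Proof. by apply/existsP; exists s; rewrite push_max_last. Qed.

Lemma push_maxK k (pi : {ffun 'I_k -> {set sgn n}}) s : pop_max (push_max pi s) = (pi, s).
Proof.
rewrite /pop_max push_max_last inE xpair_eqE eqxx andbT eq_sym eqb_id.
by congr (_, _); apply/ffunP => j; rewrite ffunE push_max_lift.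
Qed.

Lemma pop_maxK k (pi : {ffun 'I_k.+1 -> {set sgn n}}) :
  max_singleton pi -> push_max (pop_max pi).1 (pop_max pi).2 = pi.
Proof.
move=> /existsP [s /eqP pi_max]; apply/ffunP => i.
case: (unliftP ord_max i) => [j|] ->; first by rewrite push_max_lift ffunE.
by rewrite push_max_last /= pi_max inE xpair_eqE eqxx andbT eq_sym eqb_id.
Qed.

Lemma push_max_ssp k (pi : {ffun 'I_k -> {set sgn n}}) s :
  ssp T' pi -> ssp T (push_max pi s).
Proof.
move=> S; have notx := ssp_neq_max S.
have neqx y j : y \in pi j -> y = (s, x) -> False by move=> /notx + yE; rewrite yE eqxx.
split.
- move=> i; case: (unliftP ord_max i) => [j|] ->; rewrite ?push_max_lift ?push_max_last.
    exact: ssp_neq0 S j.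
  by apply/set0Pn; exists (s, x); rewrite set11.
- move=> i j y; case: (unliftP ord_max i) => [i'|] ->; rewrite ?push_max_lift ?push_max_last;
  case: (unliftP ord_max j) => [j'|] ->; rewrite ?push_max_lift ?push_max_last //.
  + by move=> yi yj; rewrite (ssp_disjoint S yi yj).
  + by move=> /neqx + /set1P.
  + by move=> /set1P + /neqx => -> /(_ erefl).
- move=> i j y; case: (unliftP ord_max i) => [i'|] ->; rewrite ?push_max_lift ?push_max_last;
  case: (unliftP ord_max j) => [j'|] ->; rewrite ?push_max_lift ?push_max_last.
  + by move=> yi /(ssp_negs S yi).
  + by move=> /notx + /set1P negsy; rewrite -[y]negsK negsy eqxx.
  + by move=> /set1P -> /notx; rewrite eqxx.
  + by move=> /set1P -> /set1P []; case: s {neqx}.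
- move=> i y; case: (unliftP ord_max i) => [j|] ->; rewrite ?push_max_lift ?push_max_last.
    by move=> /(ssp_sub S); rewrite in_setD1 => /andP [].
  by move=> /set1P ->.
- move=> e eT; have [->|ex] := eqVneq e x.
    by exists ord_max, s; rewrite push_max_last set11.
  have [i [b bei]] : exists i b, (b, e) \in pi i by apply: (ssp_cover S); rewrite in_setD1 ex.
  by exists (lift ord_max i), b; rewrite push_max_lift.
- move=> i j; case: (unliftP ord_max i) => [i'|] ->; rewrite ?push_max_lift ?push_max_last;
  case: (unliftP ord_max j) => [j'|] ->; rewrite ?push_max_lift ?push_max_last ?lift_max.
  + exact: (ssp_sorted S).
  + by rewrite minabs1 => _; apply: minabs_le_max.
  + by rewrite /= leqNgt ltn_ord.
  + by [].
Qed.

Lemma push_max_ssp_inv k (pi : {ffun 'I_k -> {set sgn n}}) s :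
  ssp T (push_max pi s) -> ssp T' pi.
Proof.
move=> S; have liftS j : pi j = push_max pi s (lift ord_max j) by rewrite push_max_lift.
have notx j y : y \in pi j -> y.2 != x.
  move=> yj; apply/eqP => yx.
  have sx : (s, x) \in push_max pi s ord_max by rewrite push_max_last set11.
  have := ssp_abs_uniq (lift ord_max j) y.1 S sx.
  by rewrite -liftS -yx -surjective_pairing yj eq_sym (negbTE (neq_lift _ _)).
split.
- by move=> i; rewrite liftS (ssp_neq0 S).
- by move=> i j y; rewrite !liftS => yi /(ssp_disjoint S yi) /lift_inj.
- by move=> i j y; rewrite !liftS => yi /(ssp_negs S yi).
- move=> j y yj; rewrite in_setD1 (notx j) //=.
  by apply: (ssp_sub S (i := lift ord_max j)); rewrite -liftS.
- move=> e; rewrite in_setD1 => /andP [ex /(ssp_cover S) [i [b]]].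
  case: (unliftP ord_max i) => [i'|] ->; rewrite ?push_max_lift ?push_max_last.
    by exists i', b.
  by move=> /set1P [_ ex']; rewrite ex' eqxx in ex.
- move=> i j ij; rewrite !liftS; apply: (ssp_sorted S).
  by rewrite !lift_max.
Qed.

Lemma mstat_push_max k (pi : {ffun 'I_k -> {set sgn n}}) s :
  ssp T' pi -> mstat (push_max pi s) = (mstat pi + (2 * k.+1 - s))%N.
Proof.
move=> S; apply: mstat_extend => //.
  rewrite /weight big_ord_recr /= push_max_last cards1 muln1; congr (_ + _)%N.
  apply: eq_bigr => i _; congr (_ * #|_|)%N.
  suff -> : widen_ord (leqnSn k) i = lift ord_max i by rewrite push_max_lift.
  by apply: val_inj; rewrite /= /bump leqNgt ltn_ord.
apply: (@pos_extend _ _ pi _ (s, x)); last exact: notin_ssp_max.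
move=> z; apply/existsP/orP => [[i]|[/existsP [i zi]|/eqP ->]].
- case: (unliftP ord_max i) => [j|] ->; rewrite ?push_max_lift ?push_max_last.
    by move=> zj; left; apply/existsP; exists j.
  by move=> /set1P ->; right.
- by exists (lift ord_max i); rewrite push_max_lift.
- by exists ord_max; rewrite push_max_last set11.
Qed.

Definition insert_max k (pi : {ffun 'I_k -> {set sgn n}}) (p : 'I_k * bool) :
  {ffun 'I_k -> {set sgn n}} :=
  [ffun j => if j == p.1 then (p.2, x) |: pi j else pi j].

Definition erase_max k (pi : {ffun 'I_k -> {set sgn n}}) : {ffun 'I_k -> {set sgn n}} :=
  [ffun j => [set y in pi j | y.2 != x]].

(* The default [ord0] is never used: x lies in a block of every SSP of T. *)
Definition max_block k (pi : {ffun 'I_k.+1 -> {set sgn n}}) : 'I_k.+1 :=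
  odflt ord0 [pick i | [exists s, (s, x) \in pi i]].

Definition max_sign k (pi : {ffun 'I_k.+1 -> {set sgn n}}) := (true, x) \in pi (max_block pi).

Definition uninsert_max k (pi : {ffun 'I_k.+1 -> {set sgn n}}) :=
  (erase_max pi, (max_block pi, max_sign pi)).

Lemma mem_insert_max k (pi : {ffun 'I_k -> {set sgn n}}) p j y :
  (y \in insert_max pi p j) = (j == p.1) && (y == (p.2, x)) || (y \in pi j).
Proof. by rewrite ffunE; case: eqP; rewrite ?inE. Qed.

Lemma mem_erase_max k (pi : {ffun 'I_k -> {set sgn n}}) j y :
  (y \in erase_max pi j) = (y \in pi j) && (y.2 != x).
Proof. by rewrite ffunE inE. Qed.

Lemma insert_max_ssp k (pi : {ffun 'I_k -> {set sgn n}}) p :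
  ssp T' pi -> ssp T (insert_max pi p).
Proof.
move=> S; have notx := ssp_neq_max S.
have neqx y j : y \in pi j -> y = (p.2, x) -> False by move=> /notx + yE; rewrite yE eqxx.
have minabsE j : minabs (insert_max pi p j) = minabs (pi j).
  apply: minabs_eq => [b bj|a]; first by exists b; rewrite // mem_insert_max bj orbT.
  rewrite mem_insert_max => /orP [/andP [_ /eqP ->]|aj]; last by exists a.
  have /set0Pn [z zj] := ssp_neq0 S j; exists z => //.
  by apply: absn_le_max; move: (ssp_sub S zj); rewrite in_setD1 => /andP [].
split.
- move=> j; have /set0Pn [z zj] := ssp_neq0 S j.
  by apply/set0Pn; exists z; rewrite mem_insert_max zj orbT.
- move=> i j y; rewrite !mem_insert_max.
  case/orP => [/andP [/eqP -> /eqP yE]|yi] /orP [/andP [/eqP -> /eqP yE']|yj] //.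
  + by case: (neqx _ _ yj yE).
  + by case: (neqx _ _ yi yE').
  + exact: (ssp_disjoint S yi yj).
- move=> i j y; rewrite !mem_insert_max.
  case/orP => [/andP [_ /eqP ->]|yi] /orP [/andP [_ /eqP]|yj].
  + by rewrite /negs; case: p.2.
  + by move/notx: yj; rewrite eqxx.
  + by move=> /(congr1 snd) /= yx; move/notx: yi; rewrite yx eqxx.
  + exact: (ssp_negs S yi yj).
- move=> j y; rewrite mem_insert_max => /orP [/andP [_ /eqP -> //]|/(ssp_sub S)].
  by rewrite in_setD1 => /andP [].
- move=> e eT; have [->|ex] := eqVneq e x.
    by exists p.1, p.2; rewrite mem_insert_max !eqxx.
  have [i [b bei]] : exists i b, (b, e) \in pi i by apply: (ssp_cover S); rewrite in_setD1 ex.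
  by exists i, b; rewrite mem_insert_max bei orbT.
- by move=> i j ij; rewrite !minabsE; apply: (ssp_sorted S).
Qed.

Lemma insert_max_not_singleton k (pi : {ffun 'I_k.+1 -> {set sgn n}}) p :
  ssp T' pi -> ~~ max_singleton (insert_max pi p).
Proof.
move=> S; apply/existsP => [[s /eqP max1]].
have /set0Pn [z zmax] := ssp_neq0 S ord_max.
have : z \in insert_max pi p ord_max by rewrite mem_insert_max zmax orbT.
by rewrite max1 => /set1P zE; move/(ssp_neq_max S): zmax; rewrite zE eqxx.
Qed.

Lemma insert_maxK k (pi : {ffun 'I_k.+1 -> {set sgn n}}) p :
  ssp T' pi -> uninsert_max (insert_max pi p) = (pi, p).
Proof.
move=> S; rewrite /uninsert_max /max_sign; have notx b j : ((b, x) \in pi j) = false.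
  by apply/negbTE/negP => /(ssp_neq_max S); rewrite eqxx.
have -> : erase_max (insert_max pi p) = pi.
  apply/ffunP => j; apply/setP => y; rewrite mem_erase_max mem_insert_max.
  case: (boolP (y \in pi j)) => [yj|_]; first by rewrite orbT (ssp_neq_max S yj).
  by rewrite orbF; case: (y =P _) => [->|]; rewrite ?eqxx ?andbF.
have -> : max_block (insert_max pi p) = p.1.
  rewrite /max_block; case: pickP => [i|none] /=.
    by case/existsP=> s; rewrite mem_insert_max notx orbF => /andP [/eqP].
  by move/(_ p.1)/negbT/existsPn: none => /(_ p.2); rewrite mem_insert_max !eqxx.
rewrite mem_insert_max notx orbF eqxx xpair_eqE eqxx andbT eq_sym eqb_id.
by case: p.
Qed.

Lemma max_blockP k (pi : {ffun 'I_k.+1 -> {set sgn n}}) :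
  ssp T pi -> (max_sign pi, x) \in pi (max_block pi).
Proof.
move=> S; have [i [s sxi]] := ssp_cover S xT.
have: [exists s, (s, x) \in pi (max_block pi)].
  by rewrite /max_block; case: pickP => [//|/(_ i) /existsP []]; exists s.
rewrite /max_sign; case/existsP => -[] sx; rewrite ?sx //.
by case: (boolP ((true, x) \in pi (max_block pi))).
Qed.

Lemma uninsert_maxK k (pi : {ffun 'I_k.+1 -> {set sgn n}}) :
  ssp T pi -> insert_max (uninsert_max pi).1 (uninsert_max pi).2 = pi.
Proof.
move=> S; have sxi := max_blockP S.
apply/ffunP => j; apply/setP => y; rewrite mem_insert_max mem_erase_max.
have [yx|yx] := eqVneq y.2 x; last first.
  rewrite andbT (_ : y == _ = false) ?andbF //.
  by apply: contraNF yx => /eqP ->.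
by rewrite andbF orbF [y]surjective_pairing yx (ssp_abs_uniq _ _ S sxi) xpair_eqE eqxx andbT.
Qed.

Lemma ssp_max_singleton_last k (pi : {ffun 'I_k.+1 -> {set sgn n}}) j s :
  ssp T pi -> pi j = [set (s, x)] -> j = ord_max.
Proof.
move=> S pij; apply/eqP; rewrite -val_eqE /= eqn_leq -ltnS ltn_ord /= leqNgt.
apply/negP => ltj; have /set0Pn [u umax] := ssp_neq0 S ord_max.
have lexu : (absn (s, x) <= absn u)%N.
  rewrite -minabs1 -pij; apply: (leq_trans _ (minabs_le umax)).
  by apply: (ssp_sorted S); apply: ltnW.
have ux : u.2 = x.
  by apply: val_inj; apply/eqP; rewrite eqn_leq xmax ?(ssp_sub S umax).
have sxj : (s, x) \in pi j by rewrite pij set11.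
move: umax; rewrite [u]surjective_pairing ux (ssp_abs_uniq _ _ S sxj).
by rewrite -val_eqE /= gtn_eqF.
Qed.

Lemma ssp_block_not_max k (pi : {ffun 'I_k.+1 -> {set sgn n}}) j :
  ssp T pi -> ~~ max_singleton pi -> exists2 w, w \in pi j & w.2 != x.
Proof.
move=> S not1; apply/exists_inP; apply: contraNT not1 => /exists_inPn allx.
have /set0Pn [z zj] := ssp_neq0 S j.
have zE : z = (z.1, x) by rewrite [z]surjective_pairing (eqP (negbNE (allx z zj))).
have pij : pi j = [set (z.1, x)].
  apply/setP => w; rewrite inE; apply/idP/eqP => [wj|->]; last by rewrite -zE.
  move: wj (allx w wj) => + /negbNE/eqP wx; rewrite [w]surjective_pairing wx.
  by rewrite zE in zj; rewrite (ssp_abs_uniq _ _ S zj) => /andP [_ /eqP ->].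
by apply/existsP; exists z.1; rewrite -(ssp_max_singleton_last S pij) pij.
Qed.

Lemma erase_max_ssp k (pi : {ffun 'I_k.+1 -> {set sgn n}}) :
  ssp T pi -> ~~ max_singleton pi -> ssp T' (erase_max pi).
Proof.
move=> S not1; have notx j := ssp_block_not_max j S not1.
have minabsE j : minabs (erase_max pi j) = minabs (pi j).
  apply: minabs_eq => [b|a]; last by rewrite mem_erase_max => /andP [aj _]; exists a.
  have [bx|bx] := eqVneq b.2 x => bj; last by exists b; rewrite // mem_erase_max bj bx.
  have [w wj wx] := notx j; exists w; first by rewrite mem_erase_max wj.
  by rewrite /absn bx; apply: xmax (ssp_sub S wj).
split.
- by move=> j; have [w wj wx] := notx j; apply/set0Pn; exists w; rewrite mem_erase_max wj.
- move=> i j y; rewrite !mem_erase_max => /andP [yi _] /andP [yj _].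
  exact: (ssp_disjoint S yi yj).
- move=> i j y; rewrite !mem_erase_max => /andP [yi _] /andP [yj _].
  exact: (ssp_negs S yi yj).
- by move=> j y; rewrite mem_erase_max in_setD1 => /andP [/(ssp_sub S) -> ->].
- move=> e; rewrite in_setD1 => /andP [ex /(ssp_cover S) [i [s sei]]].
  by exists i, s; rewrite mem_erase_max sei.
- by move=> i j ij; rewrite !minabsE; apply: (ssp_sorted S).
Qed.

Lemma mstat_insert_max k (pi : {ffun 'I_k -> {set sgn n}}) p :
  ssp T' pi -> mstat (insert_max pi p) = (mstat pi + (2 * (val p.1).+1 - p.2))%N.
Proof.
move=> S; have notx : (p.2, x) \notin pi p.1 by apply/negP => /(ssp_neq_max S); rewrite eqxx.
apply: mstat_extend => //.
  rewrite /weight (bigD1 p.1) //= [in RHS](bigD1 p.1) //= ffunE eqxx cardsU1 notx.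
  rewrite (eq_bigr (fun j : 'I_k => (val j).+1 * #|pi j|))%N; last first.
    by move=> j /negbTE jp; rewrite ffunE jp.
  by rewrite add1n mulnS [RHS]addnC addnA.
apply: (@pos_extend _ _ pi _ (p.2, x)); last exact: notin_ssp_max.
move=> z; apply/existsP/orP => [[i]|[/existsP [i zi]|/eqP ->]].
- rewrite mem_insert_max => /orP [/andP [_ ->]|zi]; first by right.
  by left; apply/existsP; exists i.
- by exists i; rewrite mem_insert_max zi orbT.
- by exists p.1; rewrite mem_insert_max !eqxx.
Qed.

End RemoveMax.
End SignedSets.

Section SspSum.
Variables (R : fieldType) (q : R) (n : nat).
Local Open Scope ring_scope.

Definition ssp_sum k (T : {set 'I_n}) :=
  \sum_(pi : {ffun 'I_k -> {set sgn n}} | is_ssp T pi) q ^+ mstat pi.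

Lemma sum_sign_weight m : \sum_(s : bool) q ^+ (2 * m.+1 - s) = q ^+ (2 * m + 1) * (1 + q).
Proof.
rewrite big_bool (_ : 2 * m.+1 - true = 2 * m + 1)%N; last by lia.
by rewrite (_ : 2 * m.+1 - false = (2 * m + 1).+1)%N ?exprS /=; [ring | lia].
Qed.

Variables (T : {set 'I_n}) (x : 'I_n).
Hypotheses (xT : x \in T) (xmax : forall e, e \in T -> (val e <= val x)%N).

Lemma ssp_sum_max_singleton k :
  \sum_(pi : {ffun 'I_k.+1 -> {set sgn n}} | is_ssp T pi && max_singleton x pi) q ^+ mstat pi =
  q ^+ (2 * k + 1) * (1 + q) * ssp_sum k (T :\ x).
Proof.
rewrite (reindex_onto (fun p => push_max x p.1 p.2) (@pop_max n x k)) /=; last first.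
  by move=> pi /andP [_ /pop_maxK ->].
rewrite (eq_bigl (fun p => is_ssp (T :\ x) p.1 && xpredT p.2)); last first.
  move=> [pi s] /=; rewrite push_maxK eqxx max_singleton_push !andbT.
  by apply/sspP/sspP; [apply: push_max_ssp_inv | apply: push_max_ssp].
rewrite -(pair_big _ xpredT (fun pi s => q ^+ mstat (push_max x pi s))) /=.
rewrite /ssp_sum mulr_sumr; apply: eq_bigr => pi /sspP S.
under eq_bigr => s _ do rewrite (mstat_push_max (T := T)) // exprD.
by rewrite -mulr_sumr sum_sign_weight mulrC.
Qed.

Lemma ssp_sum_not_max_singleton k :
  \sum_(pi : {ffun 'I_k.+1 -> {set sgn n}} | is_ssp T pi && ~~ max_singleton x pi)
     q ^+ mstat pi =
  q * (1 + q) * qint (q ^+ 2) k.+1 * ssp_sum k.+1 (T :\ x).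
Proof.
rewrite (reindex_onto (fun p => insert_max x p.1 p.2) (@uninsert_max n x k)) /=; last first.
  by move=> pi /andP [/sspP S _]; rewrite (uninsert_maxK xT).
rewrite (eq_bigl (fun p => is_ssp (T :\ x) p.1 && xpredT p.2)); last first.
  move=> [pi p] /=; rewrite andbT; apply/idP/idP.
    move=> /andP [/andP [/sspP S not1] /eqP /(congr1 fst) /= <-].
    by apply/sspP; apply: erase_max_ssp.
  move=> /sspP S; rewrite (insert_maxK (T := T)) // eqxx andbT.
  rewrite (insert_max_not_singleton (T := T)) // andbT.
  by apply/sspP; apply: insert_max_ssp.
rewrite -(pair_big _ xpredT (fun pi p => q ^+ mstat (insert_max x pi p))) /=.
rewrite /ssp_sum mulr_sumr; apply: eq_bigr => pi /sspP S.
under eq_bigr => p _ do rewrite (mstat_insert_max (T := T)) // exprD.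
rewrite -mulr_sumr mulrC; congr (_ * _).
rewrite -(pair_big xpredT xpredT (fun (i : 'I_k.+1) (s : bool) => q ^+ (2 * i.+1 - s))) /=.
rewrite /qint !mulr_sumr; apply: eq_bigr => i _.
by rewrite sum_sign_weight exprD -exprM mulnC; ring.
Qed.

Lemma ssp_sum_rec k :
  ssp_sum k.+1 T =
  q ^+ (2 * k + 1) * (1 + q) * ssp_sum k (T :\ x) +
  q * (1 + q) * qint (q ^+ 2) k.+1 * ssp_sum k.+1 (T :\ x).
Proof.
rewrite /ssp_sum (bigID (@max_singleton n x k)) /=.
by rewrite -ssp_sum_max_singleton -ssp_sum_not_max_singleton.
Qed.

End SspSum.

Section SspSumClosed.
Variables (R : fieldType) (q : R) (n : nat).
Local Open Scope ring_scope.

Definition ssp_sum_closed k t :=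
  q ^+ (k * k) * qint q 2 ^+ k * ((q * qint q 2) ^+ (t - k) * qS (q ^+ 2) t k).

Lemma ssp_sum_closedS k t :
  ssp_sum_closed k.+1 t.+1 =
  q ^+ (2 * k + 1) * (1 + q) * ssp_sum_closed k t +
  q * (1 + q) * qint (q ^+ 2) k.+1 * ssp_sum_closed k.+1 t.
Proof.
rewrite /ssp_sum_closed subSS qint2 qSS (_ : k.+1 * k.+1 = 2 * k + 1 + k * k)%N; last by lia.
have [letk|ltkt] := leqP t k.
  rewrite [qS _ t k.+1]qS_small ?ltnS // (_ : t - k = 0)%N; last by lia.
  by rewrite exprD exprS; ring.
rewrite (_ : t - k = (t - k.+1).+1)%N; last by lia.
by rewrite exprD !exprS; ring.
Qed.

Lemma ssp_sum0 (T : {set 'I_n}) : ssp_sum q 0 T = (T == set0)%:R.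
Proof.
pose pi0 : {ffun 'I_0 -> {set sgn n}} := [ffun i => set0].
have pi0E pi : pi = pi0 by apply/ffunP => [[]].
have ssp0 pi : is_ssp T pi = (T == set0) && (pi == pi0).
  rewrite (pi0E pi) eqxx andbT; apply/sspP/eqP => [S|->].
    by apply/setP => e; rewrite inE; apply/negP => /(ssp_cover S) [[]].
  by split=> [[]|[]|[]|[]|e|[]]; rewrite ?inE.
rewrite /ssp_sum (eq_bigl _ _ ssp0); case: eqP => _ /=; last by rewrite big_pred0.
rewrite big_pred1_eq /mstat big_ord0 /pos (_ : [set _ | _] = set0) ?cards0 //.
by apply/setP => y; rewrite !inE; apply/negP => /andP [_ /existsP [[]]].
Qed.

Lemma ssp_sum_set0 k : ssp_sum q k.+1 (set0 : {set 'I_n}) = 0.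
Proof.
rewrite /ssp_sum big_pred0 // => pi; apply/negP => /sspP S.
have /set0Pn [y yi] := ssp_neq0 S ord0.
by move: (ssp_sub S yi); rewrite inE.
Qed.

Lemma ssp_sumE k (T : {set 'I_n}) : ssp_sum q k T = ssp_sum_closed k #|T|.
Proof.
have [t cardT] : exists t, #|T| = t by exists #|T|.
rewrite cardT; elim: t T k cardT => [|t IH] T k cardT.
  move/cards0_eq: cardT => ->; case: k => [|k].
    by rewrite ssp_sum0 eqxx /ssp_sum_closed !expr0 !mul1r.
  by rewrite ssp_sum_set0 /ssp_sum_closed qS_small ?mulr0.
have [x0 x0T] : exists x0, x0 \in T by apply/set0Pn; rewrite -card_gt0 cardT.
have [x xT xmax] := arg_maxnP (fun e : 'I_n => val e) x0T.
have {}xT : x \in T := xT.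
have cardTx : #|T :\ x| = t by move: cardT; rewrite (cardsD1 x) xT add1n => -[].
case: k => [|k].
  rewrite ssp_sum0 /ssp_sum_closed qSS /qint big_ord0 mul0r addr0 !mulr0.
  by case: eqP x0T => [->|//]; rewrite inE.
by rewrite (ssp_sum_rec q xT xmax) !IH // ssp_sum_closedS.
Qed.

End SspSumClosed.

Section CountingSubsets.
Variables (R : nzRingType) (I : finType).
Local Open Scope ring_scope.

Definition cosingleton (A : {set I}) := [exists i, A == [set: I] :\ i].

Lemma sum_set_card (g : nat -> R) :
  \sum_(A : {set I}) g #|A| = \sum_(t < #|I|.+1) 'C(#|I|, t)%:R * g t.
Proof.
have cardA_lt (A : {set I}) : (#|A| < #|I|.+1)%N by rewrite ltnS max_card.
rewrite (partition_big (fun A : {set I} => Ordinal (cardA_lt A)) xpredT) //=.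
apply: eq_bigr => t _; rewrite (eq_bigr (fun=> g t)) => [|A /eqP <- //].
rewrite sumr_const mulr_natl -card_draws; congr (_ *+ _).
by apply: eq_card => A; rewrite !inE.
Qed.

Lemma sum_cosingleton_card (g : nat -> R) :
  \sum_(A : {set I} | cosingleton A) g #|A| = #|I|%:R * g #|I|.-1.
Proof.
have inj : {in setT &, injective (fun i : I => [set: I] :\ i)}.
  by move=> i j _ _ /setP /(_ j); rewrite !inE eqxx andbT => /negbFE /eqP.
rewrite (eq_bigl (mem [set [set: I] :\ i | i in setT])); last first.
  move=> A /=; apply/existsP/imsetP => [[i /eqP ->]|[i _ ->]]; first by exists i.
  by exists i.
rewrite big_imset //= (eq_bigr (fun=> g #|I|.-1)); last first.
  by move=> i _; rewrite cardsDS ?sub1set ?inE // cardsT cards1 subn1.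
by rewrite sumr_const cardsT mulr_natl.
Qed.

End CountingSubsets.

Section TypeD.
Variables (R : fieldType) (q : R) (n : nat).
Local Open Scope ring_scope.

Definition ssp_support k (pi : {ffun 'I_k -> {set sgn n}}) : {set 'I_n} :=
  [set e | [exists i, exists s, (s, e) \in pi i]].

Lemma ssp_supportE k T (pi : {ffun 'I_k -> {set sgn n}}) : ssp T pi -> ssp_support pi = T.
Proof.
move=> S; apply/setP => e; rewrite inE; apply/existsP/idP => [[i /existsP [s /(ssp_sub S)]] //|].
by move=> /(ssp_cover S) [i [s sei]]; exists i; apply/existsP; exists s.
Qed.

Lemma sum_is_D k :
  \sum_(pi : {ffun 'I_k -> {set sgn n}} | is_D pi) q ^+ mstat pi =
  \sum_(T : {set 'I_n} | ~~ cosingleton T) ssp_sum q k T.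
Proof.
rewrite (partition_big (@ssp_support k) (fun T => ~~ cosingleton T)) /=; last first.
  move=> pi /andP [/existsP [T /sspP S] /forallP notB]; rewrite (ssp_supportE S).
  by apply/existsP => -[i /eqP TE]; move: (notB i); rewrite -TE => /negP[]; apply/sspP.
apply: eq_bigr => T notcoT; apply: eq_bigl => pi; apply/andP/idP => [[] | ssp_pi].
  by case/andP=> /existsP [T' /sspP S] _ /eqP <-; rewrite (ssp_supportE S); apply/sspP.
have S := sspP _ _ ssp_pi; rewrite (ssp_supportE S); split=> //.
apply/andP; split; first by apply/existsP; exists T.
apply/forallP => i; apply: contra notcoT => /sspP S'; apply/existsP; exists i.
by rewrite -(ssp_supportE S) (ssp_supportE S').
Qed.

Hypotheses (q_neq0 : q != 0) (qint2_neq0 : qint q 2 != 0).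

Lemma SD_binomial k :
  SD q n k =
  binomial_transform (q * qint q 2) (qS (q ^+ 2)) n k -
  n%:R * ((q * qint q 2) ^+ (n.-1 - k) * qS (q ^+ 2) n.-1 k).
Proof.
set c := q ^+ (k * k) * qint q 2 ^+ k.
have c_neq0 : c != 0 by rewrite mulf_neq0 ?expf_neq0.
rewrite /SD sum_is_D; under eq_bigr do rewrite ssp_sumE.
rewrite [X in _ * X](_ : _ = \sum_(T : {set 'I_n}) ssp_sum_closed q k #|T| -
                            \sum_(T : {set 'I_n} | cosingleton T) ssp_sum_closed q k #|T|).
  rewrite sum_set_card sum_cosingleton_card card_ord /ssp_sum_closed -/c.
  under eq_bigr do rewrite mulrCA.
  by rewrite -mulr_sumr [n%:R * (c * _)]mulrCA -mulrBr mulKf.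
by rewrite [in RHS](bigID (@cosingleton _)) /= addrC addrK.
Qed.

End TypeD.

Local Open Scope ring_scope.

Theorem proposition3p3 (R : fieldType) (q : R) (hq0 : q != 0) (hq2 : qint q 2 != 0)
  (n k : nat) (hkn : (k <= n)%N) :
  qSB q n k =
    \sum_(k <= j < n.+1) 'C(n, j)%:R * qint q 2 ^+ (j - k) * q ^+ (j - k) * qS (q ^+ 2) j k
  /\
  qSB q n k =
    SD q n k + n%:R * qint q 2 ^ (n%:Z - k%:Z - 1) * q ^ (n%:Z - k%:Z - 1)
                 * qS (q ^+ 2) n.-1 k.
Proof.
rewrite qSB_binomial; split.
  rewrite binomial_transform_from => [|j]; last exact: qS_small.
  by apply: eq_bigr => j _; rewrite exprMn [q ^+ _ * _]mulrC !mulrA.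
rewrite SD_binomial // -[LHS](subrK (n%:R * ((q * qint q 2) ^+ (n.-1 - k) * qS (q ^+ 2) n.-1 k))).
congr (_ + _); have [ltkn|leqnk] := ltnP k n.
  rewrite (_ : n%:Z - k%:Z - 1 = (n.-1 - k)%N :> int); last by lia.
  by rewrite -!exprnP exprMn [q ^+ _ * _]mulrC !mulrA.
case: n hkn leqnk => [|n] lekn lenk; first by rewrite !mul0r.
by rewrite [qS _ _ k]qS_small ?mulr0 //; lia.
Qed.
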